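(* Let $\alpha\in\mathbb{N}$. For every $r^{(0)}(n),r^{(1)}(n),r^{(2)}(n)\in\mathbb{C}[n]$ there exists $\bar B\in\mathfrak{D}$ such that for all $n\in\mathbb{N}_0$ $$r^{(0)}(n)\int_{-1}^{n}\big[r^{(1)}(s)L^\alpha_s(x)+r^{(2)}(s)L^\alpha_{s-1}(x)\big]\,d\mu_{\mathrm{d}}(s)=\bar B\,L^\alpha_n(x).$$
   Context: Laguerre polynomials: $L^\alpha_n(x)=\frac{\Gamma(\alpha+n+1)}{\Gamma(\alpha+1)\Gamma(n+1)}\,{}_1F_1(-n;\alpha+1;x)$ for $n\in\mathbb{N}_0$, with ${}_1F_1(a;c;x)=\sum_{j\ge0}\frac{(a)_jx^j}{(c)_jj!}$, and $L^\alpha_{-j}(x)=0$ for $j\in\mathbb{N}$. Discrete integral: $\int_m^n f(s)\,d\mu_{\mathrm{d}}(s)=\sum_{s=m+1}^n f(s)$ if $n>m$ (and $0$ if $n=m$). $\mathfrak{D}$ is the associative algebra of differential operators generated by $\frac{d}{dx}$ and $x\frac{d^2}{dx^2}-x\frac{d}{dx}$. *)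

From HB Require Import structures.
From mathcomp Require Import all_boot all_order all_algebra all_field.
Set Implicit Arguments. Unset Strict Implicit. Unset Printing Implicit Defensive.
Import Order.TTheory GRing.Theory Num.Theory.
Local Open Scope ring_scope.

Definition poch (a : algC) (j : nat) : algC := \prod_(i < j) (a + i%:R).

(* Laguerre polynomial L^alpha_n(x) for n in N_0, alpha in N, as a polynomial in x:
   Gamma(alpha+n+1)/(Gamma(alpha+1) Gamma(n+1)) * 1F1(-n; alpha+1; x).
   With alpha, n natural, Gamma(k+1) = k!.  The hypergeometric series
   terminates: (-n)_j = 0 for j > n, so summing over j <= n is exact. *)
Definition laguerre (alpha n : nat) : {poly algC} :=
  (((alpha + n)`!)%:R / ((alpha`!)%:R * (n`!)%:R)) *:
  \sum_(j < n.+1) (poch (- n%:R) j / (poch (alpha%:R + 1) j * (j`!)%:R)) *: 'X^j.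

Definition laguerreZ (alpha : nat) (s : int) : {poly algC} :=
  match s with
  | Posz n => laguerre alpha n
  | Negz _ => 0
  end.

(* Discrete integral: \int_m^n f d mu_d = sum_{s=m+1}^n f(s) if n > m, 0 if n = m. *)
Definition dint (m n : int) (f : int -> {poly algC}) : {poly algC} :=
  if m < n then \sum_(k < `|n - m|%N) f (m + (k.+1)%:Z) else 0.

Definition dx_op (p : {poly algC}) : {poly algC} := p^`().
Definition lag_op (p : {poly algC}) : {poly algC} := 'X * p^`(2) - 'X * p^`().

(* D = the (unital) associative algebra of operators generated by d/dx and
   x d^2/dx^2 - x d/dx: the smallest set of operators containing the scalar
   multiples of the identity and the two generators, closed under sums,
   scalar multiples and composition. *)
Inductive inD : ({poly algC} -> {poly algC}) -> Prop :=
  | inD_scal (c : algC) : inD (fun p => c *: p)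
  | inD_dx : inD dx_op
  | inD_lag : inD lag_op
  | inD_add (A B : {poly algC} -> {poly algC}) :
      inD A -> inD B -> inD (fun p => A p + B p)
  | inD_scale (c : algC) (A : {poly algC} -> {poly algC}) :
      inD A -> inD (fun p => c *: A p)
  | inD_comp (A B : {poly algC} -> {poly algC}) :
      inD A -> inD B -> inD (fun p => A (B p)).

From HB Require Import structures.
From mathcomp Require Import all_boot all_order all_algebra all_field.
From mathcomp Require Import ring zify.
Import Order.TTheory GRing.Theory Num.Theory.
Local Open Scope ring_scope.

(* The Laguerre polynomials satisfy  x L'' - x L' + (alpha + 1) L' + n L = 0,
   so they are eigenvectors of the operator N := -(x d^2/dx^2 - x d/dx
   + (alpha + 1) d/dx) of D with eigenvalue n, and a polynomial r(N) of D acts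
   on L_n as the scalar r(n).  Moreover L_{n+1}' = L_n' - L_n, so
   sum_{t<n} L_t = -L_n'.  Hence
     r0(n) sum_{s=0}^n [r1(s) L_s + r2(s) L_{s-1}]
       = [r1(N) (1 - d/dx) r0(N) + r2(N+1) (-d/dx) r0(N)] L_n. *)

Lemma natr_fact_neq0 (j : nat) : (j`!)%:R != 0 :> algC.
Proof. by rewrite pnatr_eq0 -lt0n fact_gt0. Qed.

Section LaguerreCoefficients.
Variable alpha : nat.

Definition laguerre_coef (n j : nat) : algC :=
  (-1) ^+ j * ('C(alpha + n, alpha + j))%:R / (j`!)%:R.

Lemma laguerre_coefS n j :
  laguerre_coef n j.+1 * ((alpha + j.+1) * j.+1)%:R
  = laguerre_coef n j * (j%:R - n%:R).
Proof.
have binS : ('C(alpha + n, alpha + j.+1))%:R * (alpha + j.+1)%:R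
    = (n%:R - j%:R) * ('C(alpha + n, alpha + j))%:R :> algC.
  rewrite addnS -natrM mulnC mul_bin_left natrM.
  have [le_jn | lt_nj] := leqP j n; first by rewrite subnDl natrB.
  by rewrite (@bin_small (alpha + n) (alpha + j)) ?ltn_add2l // !mulr0.
have nz_alpha_j : (alpha + j.+1)%:R != 0 :> algC by rewrite pnatr_eq0 addnS.
have binSE : ('C(alpha + n, alpha + j.+1))%:R
    = (n%:R - j%:R) * ('C(alpha + n, alpha + j))%:R / (alpha + j.+1)%:R :> algC.
  by rewrite -binS mulfK.
rewrite /laguerre_coef binSE factS !natrM exprS.
by field; rewrite natr_fact_neq0 !nat1r -natrD !pnatr_eq0 addnS.
Qed.

Definition laguerre_series_coef (n j : nat) : algC :=
  ((alpha + n)`!)%:R / ((alpha`!)%:R * (n`!)%:R) *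
  (poch (- n%:R) j / (poch (alpha%:R + 1) j * (j`!)%:R)).

Lemma pochS a j : poch a j.+1 = poch a j * (a + j%:R).
Proof. by rewrite /poch big_ord_recr. Qed.

Lemma laguerre_series_coefS n j :
  laguerre_series_coef n j.+1 * ((alpha + j.+1) * j.+1)%:R
  = laguerre_series_coef n j * (j%:R - n%:R).
Proof.
have alpha_i_neq0 (i : nat) : alpha%:R + 1 + i%:R != 0 :> algC.
  by rewrite -addrA nat1r -natrD pnatr_eq0 addnS.
have poch_neq0 : poch (alpha%:R + 1) j != 0 by apply/prodf_neq0 => i _.
rewrite /laguerre_series_coef !pochS factS !natrM.
by field; rewrite poch_neq0 alpha_i_neq0 !natr_fact_neq0 nat1r pnatr_eq0.
Qed.

Lemma laguerre_series_coefE n j : laguerre_series_coef n j = laguerre_coef n j.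
Proof.
elim: j => [|j IHj].
  rewrite /laguerre_series_coef /laguerre_coef /poch !big_ord0 addn0 fact0 expr0.
  rewrite -(bin_fact (leq_addr n alpha)) addKn !natrM.
  by field; rewrite !natr_fact_neq0.
apply: (mulIf (x := ((alpha + j.+1) * j.+1)%:R)).
  by rewrite pnatr_eq0 muln_eq0 negb_or addnS.
by rewrite laguerre_series_coefS laguerre_coefS IHj.
Qed.

Lemma coef_laguerre n j : (laguerre alpha n)`_j = laguerre_coef n j.
Proof.
rewrite /laguerre.
rewrite -(poly_def n.+1 (fun j => poch (- n%:R) j / (poch (alpha%:R + 1) j * (j`!)%:R))).
rewrite coefZ coef_poly.
case: ltnP => [_ | lt_nj]; first exact: laguerre_series_coefE.
by rewrite /laguerre_coef bin_small ?ltn_add2l // !mulr0 mul0r.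
Qed.

Lemma deriv_laguerreS n :
  (laguerre alpha n.+1)^`() = (laguerre alpha n)^`() - laguerre alpha n.
Proof.
apply/polyP => j; rewrite coefB !coef_deriv !coef_laguerre /laguerre_coef.
rewrite !addnS binS natrD factS natrM exprS.
by field; rewrite natr_fact_neq0 nat1r pnatr_eq0.
Qed.

Lemma sum_laguerre n : \sum_(t < n) laguerre alpha t = - (laguerre alpha n)^`().
Proof.
elim: n => [|n IHn]; last by rewrite big_ord_recr /= IHn deriv_laguerreS opprB addrC.
apply/polyP => j; rewrite big_ord0 coef0 coefN coef_deriv coef_laguerre.
by rewrite /laguerre_coef addn0 bin_small ?addnS ?ltnS ?leq_addr // mulr0 mul0r mul0rn oppr0.
Qed.

(* The coefficient of x^j on the left is the recurrence [laguerre_coefS] at j. *)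
Lemma laguerre_ode n :
  lag_op (laguerre alpha n) + (alpha + 1)%:R *: (laguerre alpha n)^`()
  + n%:R *: laguerre alpha n = 0.
Proof.
apply/polyP => i; rewrite /lag_op coef0 !coefD coefN (coefZ n%:R) (coefZ (alpha + 1)%:R).
rewrite !coefXM derivnS derivn1 !coef_deriv !coef_laguerre.
case: i => [|k] /=.
  by rewrite -[RHS](subrr (laguerre_coef n 0 * (0%:R - n%:R))) -{1}laguerre_coefS; ring.
by rewrite -[RHS](subrr (laguerre_coef n k.+1 * (k.+1%:R - n%:R))) -{1}laguerre_coefS; ring.
Qed.

End LaguerreCoefficients.

Section HornerOperator.
Variables (R : comNzRingType) (V : lmodType R).

(* The empty polynomial gives [0 *: v] rather than [0] so that it is literally
   the scalar operator [inD_scal 0]. *)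
Fixpoint horner_op (s : seq R) (T : V -> V) (v : V) : V :=
  if s is a :: s' then a *: v + T (horner_op s' T v) else 0 *: v.

Lemma horner_op_eigen (T : V -> V) v l :
  scalable T -> T v = l *: v -> forall r : {poly R}, horner_op r T v = r.[l] *: v.
Proof.
move=> T_scalable Tv r; rewrite -[r in RHS]polyseqK.
elim: (polyseq r) => [|a s IHs] /=; first by rewrite horner0.
by rewrite IHs T_scalable Tv horner_cons scalerA scalerDl addrC.
Qed.

End HornerOperator.
Arguments horner_op {R V}.
Arguments horner_op_eigen {R V}.

Lemma inD_linear {A} : inD A -> linear A.
Proof.
elim=> {A} [c|||A B _ IHA _ IHB|c A _ IHA|A B _ IHA _ IHB] a p q /=.
- by rewrite scalerDr !scalerA mulrC.
- by rewrite /dx_op derivD derivZ.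
- rewrite /lag_op derivnD derivnZ derivD derivZ !mulrDr -!scalerAr.
  by rewrite scalerBr opprD addrACA.
- by rewrite IHA IHB scalerDr addrACA.
- by rewrite IHA scalerDr !scalerA mulrC.
- by rewrite IHB IHA.
Qed.

Lemma inD_linearZ {A} : inD A -> scalable A.
Proof. by move=> /inD_linear/scalable_linear. Qed.

Lemma inD_linear_sum {A} (I : Type) (r : seq I) (P : pred I) (F : I -> {poly algC}) :
  inD A -> A (\sum_(i <- r | P i) F i) = \sum_(i <- r | P i) A (F i).
Proof.
move=> /inD_linear A_linear.
exact: (linear_sum (HB.pack A (GRing.isLinear.Build _ _ _ _ A A_linear))).
Qed.

Lemma inD_horner_op (r : {poly algC}) {T} : inD T -> inD (horner_op r T).
Proof.
move=> inD_T; elim: (polyseq r) => [|a s IHs]; first exact: inD_scal.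
exact: inD_add (inD_scal a) (inD_comp inD_T IHs).
Qed.

Definition index_op (alpha : nat) (p : {poly algC}) : {poly algC} :=
  (-1) *: (lag_op p + (alpha + 1)%:R *: dx_op p).

Lemma inD_index_op alpha : inD (index_op alpha).
Proof. exact: inD_scale (inD_add inD_lag (inD_scale _ inD_dx)). Qed.

Lemma index_op_laguerre alpha n :
  index_op alpha (laguerre alpha n) = n%:R *: laguerre alpha n.
Proof.
apply/eqP; rewrite /index_op /dx_op scaleN1r eq_sym -addr_eq0 addrC.
by rewrite laguerre_ode.
Qed.

Lemma horner_index_op_laguerre alpha (r : {poly algC}) n :
  horner_op r (index_op alpha) (laguerre alpha n) = r.[n%:R] *: laguerre alpha n.
Proof.
exact: horner_op_eigen (inD_linearZ (inD_index_op alpha)) (index_op_laguerre alpha n) r.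
Qed.

Lemma horner_index_op_sum_laguerre alpha (r : {poly algC}) m :
  horner_op r (index_op alpha) (\sum_(t < m) laguerre alpha t)
  = \sum_(t < m) r.[t%:R] *: laguerre alpha t.
Proof.
rewrite inD_linear_sum; last exact: inD_horner_op (inD_index_op alpha).
by apply: eq_bigr => t _; rewrite horner_index_op_laguerre.
Qed.

Lemma dint_neg1 (n : nat) (f : int -> {poly algC}) :
  dint (-1) n%:Z f = \sum_(k < n.+1) f k%:Z.
Proof.
rewrite /dint.
have -> : `|(n%:Z - -1)%R|%N = n.+1 by lia.
by apply: eq_bigr => k _; rewrite (_ : -1 + k.+1%:Z = k%:Z) //; lia.
Qed.

Theorem lemma4p4 (alpha : nat) (halpha : (0 < alpha)%N)
    (r0 r1 r2 : {poly algC}) :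
  exists B : {poly algC} -> {poly algC},
    inD B /\
    forall n : nat,
      r0.[n%:R] *:
        dint (-1) n%:Z
          (fun s : int => r1.[s%:~R] *: laguerreZ alpha s
                          + r2.[s%:~R] *: laguerreZ alpha (s - 1))
      = B (laguerre alpha n).
Proof.
pose N := index_op alpha; have inD_N : inD N := inD_index_op alpha.
pose sum_le p := 1 *: p + (-1) *: dx_op p.
pose sum_lt p := (-1) *: dx_op p.
have inD_sum_le : inD sum_le := inD_add (inD_scal 1) (inD_scale (-1) inD_dx).
have inD_sum_lt : inD sum_lt := inD_scale (-1) inD_dx.
pose R0 := horner_op r0 N; have inD_R0 : inD R0 := inD_horner_op r0 inD_N.
pose R1 := horner_op r1 N; have inD_R1 : inD R1 := inD_horner_op r1 inD_N.
pose R2 := horner_op (r2 \Po ('X + 1)) N.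
have inD_R2 : inD R2 := inD_horner_op _ inD_N.
exists (fun p => R1 (sum_le (R0 p)) + R2 (sum_lt (R0 p))); split.
  exact: inD_add (inD_comp inD_R1 (inD_comp inD_sum_le inD_R0))
                 (inD_comp inD_R2 (inD_comp inD_sum_lt inD_R0)).
move=> n; rewrite /R0 horner_index_op_laguerre (inD_linearZ inD_sum_le).
rewrite (inD_linearZ inD_sum_lt) (inD_linearZ inD_R1) (inD_linearZ inD_R2) -scalerDr.
congr (_ *: _).
have -> : sum_le (laguerre alpha n) = \sum_(t < n.+1) laguerre alpha t.
  by rewrite big_ord_recr /= sum_laguerre /sum_le scale1r scaleN1r addrC.
have -> : sum_lt (laguerre alpha n) = \sum_(t < n) laguerre alpha t.
  by rewrite sum_laguerre /sum_lt scaleN1r.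
rewrite /R1 /R2 !horner_index_op_sum_laguerre dint_neg1 big_split /=.
congr (_ + _); rewrite big_ord_recl scaler0 add0r.
by apply: eq_bigr => t _; rewrite lift0 horner_comp !hornerE /= natr1 subn1.
Qed.
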